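(* Fix the graph Laplacian $L$ (notation in the context) and the diffusion coefficient $b\neq0$. Let $\tau_0>0$ and $\alpha_\tau\in[0,1)$ with $(1+\alpha_\tau)\tau_0<\pi/(2\lambda_n)$, and for $\lambda>0$ let $f_\lambda(\tau)=\frac{\cos(\lambda\tau)}{\lambda(1-\sin(\lambda\tau))}$. Define $$\varepsilon_\tau^{\pm}=\max_{k\in\{2,\dots,n\}}\frac{\big|f_{\lambda_k}((1\pm\alpha_\tau)\tau_0)-f_{\lambda_k}(\tau_0)\big|}{f_{\lambda_k}(\tau_0)}.$$ Then for every $\tau$ with $(1-\alpha_\tau)\tau_0\le\tau\le(1+\alpha_\tau)\tau_0$, the steady-state covariances satisfy $(1-\varepsilon_\tau^-)\Sigma(\tau_0)\preceq\Sigma(\tau)\preceq(1+\varepsilon_\tau^+)\Sigma(\tau_0)$; i.e., the steady-state distribution of the observables lies in $\mathcal M_\tau=\{\mathcal N(0,\Sigma):(1-\varepsilon_\tau^-)\Sigma_0\preceq\Sigma\preceq(1+\varepsilon_\tau^+)\Sigma_0\}$ with $\Sigma_0=\Sigma(\tau_0)$.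
   Context: Network: $\mathrm d x_t=-L\,x_{t-\tau}\,\mathrm dt+b\,\mathrm d w_t$, $w_t$ standard $n$-dimensional Brownian motion, $L$ the Laplacian of a connected undirected simple graph with positive edge weights, $L=Q\Lambda Q^\top$, $Q=[q_1|\dots|q_n]$ orthogonal, $q_1=\mathbf 1_n/\sqrt n$, $\Lambda=\mathrm{diag}(0,\lambda_2,\dots,\lambda_n)$, $0<\lambda_2\le\dots\le\lambda_n$. For a delay $\tau$ with $0\le\tau<\pi/(2\lambda_n)$, the observables $y=M_nx$, $M_n=I_n-\frac1n\mathbf 1_n\mathbf 1_n^\top$, have steady-state law $\mathcal N(0,\Sigma(\tau))$ with $\Sigma(\tau)=b^2M_nQ\Psi(\tau)Q^\top M_n$, $\Psi(\tau)=\mathrm{diag}\big(0,\tfrac12 f_{\lambda_2}(\tau),\dots,\tfrac12 f_{\lambda_n}(\tau)\big)$. $A\preceq B$ means $B-A$ is positive semidefinite. *)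

From HB Require Import structures.
From mathcomp Require Import all_boot all_order all_algebra.
From mathcomp Require Import all_classical all_reals all_analysis.
Set Implicit Arguments. Unset Strict Implicit. Unset Printing Implicit Defensive.
Import Order.TTheory GRing.Theory Num.Theory.
Local Open Scope ring_scope.

Section Defs.
Variable R : realType.

Definition f_lam (lam tau : R) : R :=
  cos (lam * tau) / (lam * (1 - sin (lam * tau))).

Definition laplacian (m : nat) (W : 'M[R]_m) : 'M[R]_m :=
  \matrix_(i, j) ((i == j)%:R * (\sum_(k < m) W i k) - W i j).

(* W is the weight matrix of an undirected simple graph with positive
   edge weights: symmetric, nonnegative, zero diagonal (no loops);
   edges are the pairs with W i j > 0. *)
Definition simple_weighted_graph (m : nat) (W : 'M[R]_m) : Prop :=
  [/\ W^T = W, forall i j, 0 <= W i j & forall i, W i i = 0].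

Definition graph_connected (m : nat) (W : 'M[R]_m) : Prop :=
  forall i j : 'I_m, connect [rel a b | 0 < W a b] i j.

Definition centering (m : nat) : 'M[R]_m :=
  1%:M - (m%:R)^-1 *: const_mx 1.

Definition Psi (m : nat) (lam : 'I_m.+1 -> R) (tau : R) : 'M[R]_m.+1 :=
  diag_mx (\row_k (if k == ord0 then 0 else f_lam (lam k) tau / 2)).

Definition Sigma (m : nat) (b : R) (Q : 'M[R]_m.+1) (lam : 'I_m.+1 -> R)
  (tau : R) : 'M[R]_m.+1 :=
  b ^+ 2 *: (centering m.+1 *m Q *m Psi lam tau *m Q^T *m centering m.+1).

Definition psd (m : nat) (A : 'M[R]_m) : Prop :=
  A^T = A /\ forall v : 'rV[R]_m, 0 <= (v *m A *m v^T) 0 0.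

Definition loewner_le (m : nat) (A B : 'M[R]_m) : Prop := psd (B - A).

Definition eps_dev (m : nat) (lam : 'I_m.+1 -> R) (t tau0 : R) : R :=
  \big[Num.max/0]_(k | k != ord0)
     (`|f_lam (lam k) t - f_lam (lam k) tau0| / f_lam (lam k) tau0).

End Defs.

From HB Require Import structures.
From mathcomp Require Import all_boot all_order all_algebra.
From mathcomp Require Import all_classical all_reals all_analysis.
From mathcomp Require Import lra.
Set Implicit Arguments. Unset Strict Implicit. Unset Printing Implicit Defensive.
Import Order.TTheory GRing.Theory Num.Theory.
Local Open Scope ring_scope.

(** [Sigma(tau)] is the congruence of the diagonal matrix
    [Psi(tau)] by the fixed matrix [M_n Q], so the Loewner comparisons reduce
    to comparing the diagonal entries [f_{lam_k}(tau)] one eigenvalue at a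
    time.  As long as [lam_k tau < pi/2], [f_lam] is positive and
    nondecreasing in [tau] (write [cos x / (1 - sin x) = (1 + sin x) / cos x]),
    so [f_{lam_k}(tau)] lies between its values at [(1 -+ alpha) tau0], which
    by definition of [eps^-+] are within the factors [1 -+ eps^-+] of
    [f_{lam_k}(tau0)]. *)

Section ScalarBounds.
Variable R : realType.
Implicit Types x y l s t : R.

Lemma ler_sin_in x y : - (pi / 2) <= x -> x <= y -> y <= pi / 2 -> sin x <= sin y.
Proof.
move=> x_ge xy y_le; have [-> // | x_neq_y] := eqVneq x y.
by rewrite ltW // ltr_sin ?in_itv /= ?lt_neqAle ?x_neq_y ?xy //; apply/andP; lra.
Qed.

Lemma ler_cos_in x y : 0 <= x -> x <= y -> y <= pi -> cos y <= cos x.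
Proof.
move=> x_ge xy y_le; have [-> // | x_neq_y] := eqVneq x y.
by rewrite ltW // ltr_cos ?in_itv /= ?lt_neqAle ?x_neq_y ?xy //; apply/andP; lra.
Qed.

Lemma cos_div_1Bsin x : cos x != 0 -> sin x != 1 ->
  cos x / (1 - sin x) = (1 + sin x) / cos x.
Proof.
move=> cx0 sx1; have sx1' : 1 - sin x != 0 by rewrite subr_eq0 eq_sym.
apply/eqP; rewrite eqr_div //; apply/eqP.
have := cos2Dsin2 x; rewrite !expr2 => h; rewrite mulrDl !mulrBr; lra.
Qed.

Lemma sin_lt1 x : - (pi / 2) <= x -> x < pi / 2 -> sin x < 1.
Proof.
move=> x_ge x_lt; have := pi_gt0 R => pi_gt0.
by rewrite -sin_pihalf ltr_sin // in_itv /=; apply/andP; lra.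
Qed.

Lemma cos_div_1Bsin_le x y : 0 <= x -> x <= y -> y < pi / 2 ->
  cos x / (1 - sin x) <= cos y / (1 - sin y).
Proof.
move=> x_ge0 xy y_lt; have := pi_gt0 R => pi_gt0.
have cx : 0 < cos x by apply: cos_gt0_pihalf; apply/andP; lra.
have cy : 0 < cos y by apply: cos_gt0_pihalf; apply/andP; lra.
have sx : sin x < 1 by apply: sin_lt1; lra.
have sy : sin y < 1 by apply: sin_lt1; lra.
rewrite !cos_div_1Bsin ?(gt_eqF cx) ?(gt_eqF cy) ?(lt_eqF sx) ?(lt_eqF sy) //.
rewrite ler_pdivrMr // mulrAC ler_pdivlMr //; apply: ler_pM.
- by rewrite addr_ge0 // sin_ge0_pi //; apply/andP; lra.
- exact: ltW.
- by rewrite lerD2l ler_sin_in //; lra.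
- by rewrite ler_cos_in //; lra.
Qed.

Lemma f_lamE l t : f_lam l t = cos (l * t) / (1 - sin (l * t)) / l.
Proof. by rewrite /f_lam invfM mulrA mulrAC. Qed.

Lemma f_lam_le l s t : 0 < l -> 0 <= s -> s <= t -> l * t < pi / 2 ->
  f_lam l s <= f_lam l t.
Proof.
move=> l_gt0 s_ge0 st lt_lt; rewrite !f_lamE ler_wpM2r ?invr_ge0 ?(ltW l_gt0) //.
by apply: cos_div_1Bsin_le; rewrite ?mulr_ge0 ?ler_pM2l ?(ltW l_gt0).
Qed.

Lemma f_lam_gt0 l t : 0 < l -> 0 <= t -> l * t < pi / 2 -> 0 < f_lam l t.
Proof.
move=> l_gt0 t_ge0 lt_lt; have := mulr_ge0 (ltW l_gt0) t_ge0 => lt_ge0.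
have := pi_gt0 R => pi_gt0.
rewrite f_lamE !divr_gt0 ?subr_gt0 ?sin_lt1 //; last by lra.
by apply: cos_gt0_pihalf; apply/andP; lra.
Qed.

Lemma mul_lt_pihalf l lmax t tmax : 0 < l -> l <= lmax -> 0 <= t -> t <= tmax ->
  tmax < pi / (2 * lmax) -> l * t < pi / 2.
Proof.
move=> l_gt0 l_le t_ge0 t_le; have lmax_gt0 : 0 < lmax by exact: lt_le_trans l_le.
rewrite ltr_pdivlMr ?mulr_gt0 // ltr_pdivlMr // => tmax_lt.
have := ler_pM (ltW l_gt0) t_ge0 l_le t_le.
lra.
Qed.

Lemma rel_dev_bounds x y e : 0 < y -> `|x - y| / y <= e ->
  (1 - e) * y <= x <= (1 + e) * y.
Proof.
by move=> y_gt0; rewrite ler_pdivrMr // ler_norml => /andP ?; apply/andP; lra.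
Qed.

End ScalarBounds.

Section Covariance.
Variable R : realType.

Lemma psdZ m a (A : 'M[R]_m) : 0 <= a -> psd A -> psd (a *: A).
Proof.
move=> a_ge0 [A_sym A_ge0]; split; first by rewrite linearZ /= A_sym.
by move=> v; rewrite -scalemxAr -scalemxAl mxE mulr_ge0.
Qed.

Lemma psd_diag m (d : 'rV[R]_m) : (forall k, 0 <= d 0 k) -> psd (diag_mx d).
Proof.
move=> d_ge0; split; first exact: tr_diag_mx.
move=> v; rewrite mul_mx_diag mxE; apply: sumr_ge0 => k _; rewrite !mxE.
by rewrite mulrAC -expr2 mulr_ge0 ?sqr_ge0.
Qed.

Lemma psd_congr m p (P : 'M[R]_(m, p)) (D : 'M[R]_p) :
  psd D -> psd (P *m D *m P^T).
Proof.
move=> [D_sym D_ge0]; split; first by rewrite !trmx_mul trmxK D_sym mulmxA.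
move=> v; have -> : v *m (P *m D *m P^T) *m v^T = v *m P *m D *m (v *m P)^T.
  by rewrite trmx_mul !mulmxA.
exact: D_ge0.
Qed.

Lemma centering_sym m : (centering R m)^T = centering R m.
Proof. by rewrite /centering linearB /= linearZ /= trmx_const tr_scalar_mx. Qed.

Lemma SigmaE n b (Q : 'M[R]_n.+1) lam t :
  Sigma b Q lam t =
  b ^+ 2 *: (centering R n.+1 *m Q *m Psi lam t *m (centering R n.+1 *m Q)^T).
Proof. by rewrite /Sigma trmx_mul centering_sym !mulmxA. Qed.

Lemma loewner_le_Sigma n b (Q : 'M[R]_n.+1) lam a c s t :
  (forall k, k != ord0 -> a * f_lam (lam k) s <= c * f_lam (lam k) t) ->
  loewner_le (a *: Sigma b Q lam s) (c *: Sigma b Q lam t).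
Proof.
move=> f_le; rewrite /loewner_le; set P := centering R n.+1 *m Q.
have -> : c *: Sigma b Q lam t - a *: Sigma b Q lam s =
    b ^+ 2 *: (P *m (c *: Psi lam t - a *: Psi lam s) *m P^T).
  rewrite !SigmaE -/P mulmxBr mulmxBl -!scalemxAr -!scalemxAl.
  by rewrite scalerBr !scalerA (mulrC c) (mulrC a).
apply/psdZ/psd_congr; rewrite ?sqr_ge0 //.
have -> : c *: Psi lam t - a *: Psi lam s = diag_mx (\row_k
    (if k == ord0 then 0 else (c * f_lam (lam k) t - a * f_lam (lam k) s) / 2)).
  apply/matrixP => i j; rewrite !mxE.
  by case: (i == j); case: (i == ord0); rewrite ?mulr1n ?mulr0n; lra.
apply: psd_diag => k; rewrite mxE; case: ifPn => // k0.
by rewrite divr_ge0 // subr_ge0 f_le.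
Qed.

Lemma eps_dev_ge n (lam : 'I_n.+1 -> R) t t0 k : k != ord0 ->
  `|f_lam (lam k) t - f_lam (lam k) t0| / f_lam (lam k) t0 <= eps_dev lam t t0.
Proof. by move=> k0; rewrite /eps_dev; apply: le_bigmax_cond. Qed.

End Covariance.

(* The network has n.+1 nodes, indexed by 'I_n.+1; index ord0 is the
   paper's index 1 and ord_max the paper's index n. *)
Theorem proposition2 (R : realType) (n : nat) (W : 'M[R]_n.+1)
  (Q : 'M[R]_n.+1) (lam : 'I_n.+1 -> R) (b tau0 alpha : R) :
  simple_weighted_graph W ->
  graph_connected W ->
  Q *m Q^T = 1%:M ->
  laplacian W = Q *m diag_mx (\row_k lam k) *m Q^T ->
  (forall i, Q i ord0 = (Num.sqrt (n.+1)%:R)^-1) ->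
  lam ord0 = 0 ->
  (forall k, k != ord0 -> 0 < lam k) ->
  (forall i j : 'I_n.+1, (i <= j)%N -> lam i <= lam j) ->
  b != 0 ->
  0 < tau0 ->
  0 <= alpha < 1 ->
  (1 + alpha) * tau0 < pi / (2 * lam ord_max) ->
  forall tau, (1 - alpha) * tau0 <= tau <= (1 + alpha) * tau0 ->
    loewner_le ((1 - eps_dev lam ((1 - alpha) * tau0) tau0) *: Sigma b Q lam tau0)
               (Sigma b Q lam tau) /\
    loewner_le (Sigma b Q lam tau)
               ((1 + eps_dev lam ((1 + alpha) * tau0) tau0) *: Sigma b Q lam tau0).
Proof.
move=> _ _ _ _ _ _ lam_gt0 lam_mono _ tau0_gt0 /andP[alpha_ge0 alpha_lt1] tp_lt.
move=> tau /andP[tm_le tau_le].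
set tm := (1 - alpha) * tau0 in tm_le *.
set tp := (1 + alpha) * tau0 in tp_lt tau_le *.
have tm_ge0 : 0 <= tm by apply: mulr_ge0; lra.
have [tm_le0 le0_tp] : tm <= tau0 /\ tau0 <= tp by rewrite /tm /tp; split; nra.
have tau_ge0 : 0 <= tau := le_trans tm_ge0 tm_le.
have tp_ge0 : 0 <= tp := le_trans (ltW tau0_gt0) le0_tp.
have lam_t_lt k t : k != ord0 -> 0 <= t -> t <= tp -> lam k * t < pi / 2.
  move=> k0 t_ge0 t_le; have lam_le := lam_mono k ord_max (leq_ord k).
  exact: mul_lt_pihalf (lam_gt0 k k0) lam_le t_ge0 t_le tp_lt.
rewrite -[Sigma b Q lam tau]scale1r.
split; apply: loewner_le_Sigma => k k0; rewrite mul1r; have lk_gt0 := lam_gt0 k k0.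
all: have f0_gt0 := f_lam_gt0 lk_gt0 (ltW tau0_gt0)
                       (lam_t_lt k tau0 k0 (ltW tau0_gt0) le0_tp).
- have /andP[lo _] := rel_dev_bounds f0_gt0 (eps_dev_ge lam tm tau0 k0).
  exact: le_trans lo (f_lam_le lk_gt0 tm_ge0 tm_le (lam_t_lt k tau k0 tau_ge0 tau_le)).
- have /andP[_ hi] := rel_dev_bounds f0_gt0 (eps_dev_ge lam tp tau0 k0).
  exact: le_trans (f_lam_le lk_gt0 tau_ge0 tau_le (lam_t_lt k tp k0 tp_ge0 (lexx tp))) hi.
Qed.
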